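(* Let $E\subset F$ be differential fields of characteristic zero with the same algebraically closed field of constants $C$. Suppose there is $x\in E$ with $x'=1$, and let $y,z\in F$ be such that $y'\in E$, $y$ is transcendental over $E$, $z\in E(y)$ and $z'=y$. Then $z=Ay+B$ for some $A,B\in E$. *)

From HB Require Import structures.
From mathcomp Require Import all_boot all_order all_algebra.
Set Implicit Arguments. Unset Strict Implicit. Unset Printing Implicit Defensive.
Import Order.TTheory GRing.Theory Num.Theory.
Local Open Scope ring_scope.

Definition derivation (F : ringType) (D : F -> F) : Prop :=
  (forall a b, D (a + b) = D a + D b) /\
  (forall a b, D (a * b) = D a * b + a * D b).

Definition is_subfield (F : fieldType) (E : pred F) : Prop :=
  [/\ 0 \in E, 1 \in E,
      (forall a b, a \in E -> b \in E -> a - b \in E),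
      (forall a b, a \in E -> b \in E -> a * b \in E) &
      (forall a, a \in E -> a^-1 \in E)].

Definition is_diff_subfield (F : fieldType) (D : F -> F) (E : pred F) : Prop :=
  is_subfield E /\ (forall a, a \in E -> D a \in E).

Definition coefs_in (F : fieldType) (E : pred F) (p : {poly F}) : Prop :=
  forall i, p`_i \in E.

Definition constants_alg_closed (F : fieldType) (D : F -> F) : Prop :=
  forall p : {poly F}, (forall i, D p`_i = 0) -> (1 < size p)%N ->
    exists c, D c = 0 /\ root p c.

Definition transcendental_over (F : fieldType) (E : pred F) (y : F) : Prop :=
  forall p : {poly F}, coefs_in E p -> p.[y] = 0 -> p = 0.

Definition in_adjoin (F : fieldType) (E : pred F) (y z : F) : Prop :=
  exists p q : {poly F}, [/\ coefs_in E p, coefs_in E q, q.[y] != 0 &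
                             z = p.[y] / q.[y]].

(* Write z = P(y) + r(y)/q(y) with P, r, q in E[Y] and deg r < deg q, and extend D to
   E[Y] by Y' = y'.  Then z' = y becomes the identity (Y - P^D) q^2 = r^D q - r q^D
   between polynomials over E evaluated at the transcendental y, hence an identity in
   E[Y]; the right-hand side has degree < 2 deg q, so P^D = Y and (r/q)(y) is constant,
   so it lies in E.  If P had degree n >= 2, comparing the coefficients of Y^n and
   Y^(n-1) in P^D = Y would make b + n c y - [n = 2] x constant (c, b the two top
   coefficients of P), putting y in E.  Hence z = P_1 y + (P_0 + (r/q)(y)). *)

From HB Require Import structures.
From mathcomp Require Import all_boot all_order all_algebra.
From mathcomp Require Import ring zify.
Import GRing.Theory.
Set Implicit Arguments.
Unset Strict Implicit.
Unset Printing Implicit Defensive.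
Local Open Scope ring_scope.

Lemma size_sub_lead (R : nzRingType) (p m : {poly R}) : p != 0 ->
  size m = size p -> lead_coef m = lead_coef p -> (size (p - m)%R < size p)%N.
Proof.
rewrite -size_poly_gt0 => p_gt0 eq_size eq_lead.
suff: (size (p - m)%R <= (size p).-1)%N by rewrite -ltnS prednK.
apply/leq_sizeP => i; rewrite leq_eqVlt => /predU1P[<-|lt_i].
  by rewrite coefB -lead_coefE -eq_lead lead_coefE eq_size subrr.
have le_p_i : (size p <= i)%N by rewrite -(prednK p_gt0).
by rewrite coefB !nth_default ?subr0 ?eq_size.
Qed.

Lemma polyOver_edivp (F : fieldType) (S : divringClosed F) p q :
  q \is a polyOver S -> q != 0 -> p \is a polyOver S ->
  exists P r, [/\ P \is a polyOver S, r \is a polyOver S,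
                  p = P * q + r & (size r < size q)%N].
Proof.
move=> Sq q0; elim: {p}(size p) {-2}p (leqnn (size p)) => [|n IHn] p le_p_n Sp.
  exists 0, p; split; rewrite ?rpred0 ?mul0r ?add0r //.
  by apply: leq_ltn_trans le_p_n _; rewrite size_poly_gt0.
have [lt_pq | le_qp] := ltnP (size p) (size q).
  by exists 0, p; split; rewrite ?rpred0 ?mul0r ?add0r.
have p0 : p != 0 by rewrite -size_poly_gt0; apply: leq_trans le_qp; rewrite size_poly_gt0.
pose c := lead_coef p / lead_coef q.
have c0 : c != 0 by rewrite mulf_neq0 ?invr_eq0 ?lead_coef_eq0.
have Sc : c \in S by apply: rpred_div; apply: (polyOverP _).
pose m := c *: (q * 'X^(size p - size q)).
have Sm : m \is a polyOver S.
  by apply: polyOverZ => //; apply: rpredM => //; apply: polyOverXn.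
have size_m : size m = size p.
  by rewrite size_scale // size_Mmonic ?monicXn // size_polyXn addnS subnKC.
have lead_m : lead_coef m = lead_coef p.
  by rewrite lead_coefZ lead_coef_Mmonic ?monicXn // divfK ?lead_coef_eq0.
have [|P [r [SP Sr def_pm lt_rq]]] := IHn (p - m) _ (rpredB Sp Sm).
  by rewrite -ltnS (leq_trans (size_sub_lead p0 size_m lead_m)).
exists (P + c *: 'X^(size p - size q)), r; split => //.
  by apply: rpredD => //; apply: polyOverZ => //; apply: polyOverXn.
by rewrite mulrDl -addrAC -def_pm -scalerAl mulrC subrK.
Qed.

Section Derivation.
Variables (R : nzRingType) (D : R -> R).
Hypothesis derD : derivation D.

Lemma derivationD a b : D (a + b) = D a + D b. Proof. exact: derD.1. Qed.
Lemma derivationM a b : D (a * b) = D a * b + a * D b. Proof. exact: derD.2. Qed.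

Lemma derivation0 : D 0 = 0.
Proof. by apply: (addIr (D 0)); rewrite -derivationD !add0r. Qed.

Lemma derivationN a : D (- a) = - D a.
Proof. by apply: (addIr (D a)); rewrite -derivationD !addNr derivation0. Qed.

Lemma derivationB a b : D (a - b) = D a - D b.
Proof. by rewrite derivationD derivationN. Qed.

Lemma derivationMn a n : D (a *+ n) = D a *+ n.
Proof. by elim: n => [|n IHn]; rewrite ?mulr0n ?derivation0 // !mulrS derivationD IHn. Qed.

Definition deriv_ext (a : R) (p : {poly R}) := map_poly D p + a *: p^`().

Lemma coef_deriv_ext a p i : (deriv_ext a p)`_i = D p`_i + a * (p`_i.+1 *+ i.+1).
Proof. by rewrite coefD coef_map_id0 ?derivation0 // coefZ coef_deriv. Qed.

Lemma size_deriv_ext a p : (size (deriv_ext a p) <= size p)%N.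
Proof.
apply/leq_sizeP => i le_p_i; rewrite coef_deriv_ext !nth_default ?derivation0 //.
  by rewrite mul0rn mulr0 addr0.
exact: leq_trans le_p_i _.
Qed.

Lemma polyOver_deriv_ext (S : semiringClosed R) a p :
  {in S, forall c, D c \in S} -> a \in S -> p \is a polyOver S ->
  deriv_ext a p \is a polyOver S.
Proof.
move=> DS Sa /polyOverP Sp; apply/polyOverP => i.
by rewrite coef_deriv_ext rpredD ?rpredM ?rpredMn ?DS.
Qed.

End Derivation.

Lemma horner_deriv_ext (R : comNzRingType) (D : R -> R) y p :
  derivation D -> D p.[y] = (deriv_ext D (D y) p).[y].
Proof.
move=> derD; elim/poly_ind: p => [|p c IHp].
  by rewrite /deriv_ext map_poly0 deriv0 scaler0 addr0 !horner0 (derivation0 derD).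
have map_MXaddC : map_poly D (p * 'X + c%:P) = map_poly D p * 'X + (D c)%:P.
  apply/polyP => i; rewrite coef_map_id0 ?(derivation0 derD) // !coefD !coefMX !coefC.
  by case: i => [|i] /=; rewrite ?add0r ?addr0 ?coef_map_id0 ?(derivation0 derD).
rewrite /deriv_ext map_MXaddC derivMXaddC hornerMXaddC.
rewrite !(derivationD derD) (derivationM derD) IHp /deriv_ext.
rewrite !(hornerD, hornerZ, hornerMXaddC, hornerM, hornerX, hornerC).
ring.
Qed.

Lemma size_deriv_ext_cross (R : idomainType) (D : R -> R) a (r q : {poly R}) :
  derivation D -> (size r < size q)%N ->
  (size (deriv_ext D a r * q - r * deriv_ext D a q)%R < size (q * q)%R)%N.
Proof.
move=> derD lt_rq; have q0 : q != 0 by rewrite -size_poly_gt0; apply: leq_ltn_trans lt_rq.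
have le_cross (u v : {poly R}) : (size u <= size r)%N -> (size v <= size q)%N ->
    (size (u * v)%R <= (size r + size q).-1)%N.
  move=> le_u le_v; apply: leq_trans (size_polyMleq u v) _.
  by rewrite -!subn1 leq_sub2r // leq_add.
apply: (leq_ltn_trans (size_polyD _ _)); rewrite size_polyN.
apply: (@leq_ltn_trans (size r + size q).-1).
  by rewrite geq_max !le_cross ?size_deriv_ext.
have q_gt0 : (0 < size q)%N by rewrite size_poly_gt0.
by rewrite size_mul // -!subn1; lia.
Qed.

Section TranscendentalElement.
Variables (F : fieldType) (D : F -> F) (S : divringClosed F) (y : F).
Hypotheses (derD : derivation D)
  (y_transc : forall p, p \is a polyOver S -> p.[y] = 0 -> p = 0).

Local Notation Dy := (deriv_ext D (D y)).

Lemma horner_transc_neq0 q : q \is a polyOver S -> q != 0 -> q.[y] != 0.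
Proof. by move=> Sq; apply: contra_neq; apply: y_transc. Qed.

Lemma transc_notin : y \notin S.
Proof.
apply/negP => Sy; have SXy : 'X - y%:P \is a polyOver S by rewrite polyOverXsubC.
have /eqP := y_transc SXy (etrans (hornerXsubC y y) (subrr y)).
by rewrite -size_poly_eq0 size_XsubC.
Qed.

Lemma derivation_horner_frac r q : q.[y] != 0 ->
  D (r.[y] / q.[y]) * (q.[y] * q.[y]) = (Dy r * q - r * Dy q).[y].
Proof.
move=> qy0; rewrite hornerD hornerN !hornerM -!horner_deriv_ext //.
move: (r.[y] / q.[y]) (divfK qy0 r.[y]) => rho <-.
rewrite (derivationM derD); ring.
Qed.

Section DifferentialSubfield.
Hypotheses (DS : {in S, forall c, D c \in S}) (SDy : D y \in S).

Lemma antiderivative_frac_parts P r q :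
  P \is a polyOver S -> r \is a polyOver S -> q \is a polyOver S -> q != 0 ->
  (size r < size q)%N -> D (P.[y] + r.[y] / q.[y]) = y ->
  Dy P = 'X /\ D (r.[y] / q.[y]) = 0.
Proof.
move=> SP Sr Sq q0 lt_rq; have qy0 := horner_transc_neq0 Sq q0.
rewrite (derivationD derD) (horner_deriv_ext _ _ derD) => DzE.
set T := Dy r * q - r * Dy q.
have ST : T \is a polyOver S by rewrite rpredB ?rpredM ?polyOver_deriv_ext.
have S_XDyP : 'X - Dy P \is a polyOver S by rewrite rpredB ?polyOverX ?polyOver_deriv_ext.
have root_cross : (('X - Dy P) * (q * q) - T).[y] = 0.
  rewrite hornerD hornerN hornerM -derivation_horner_frac // hornerD hornerN hornerX.
  by rewrite -{1}DzE hornerM [(Dy P).[y] + _]addrC addrK subrr.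
have XqqT : ('X - Dy P) * (q * q) = T.
  by apply/subr0_eq/y_transc => //; rewrite rpredB ?rpredM.
have T0 : T = 0.
  apply/eqP; apply: contraTT (size_deriv_ext_cross (D y) derD lt_rq) => T0.
  by rewrite -leqNgt dvdp_leq // -/T -XqqT dvdp_mull.
move/eqP: XqqT; rewrite T0 mulf_eq0 (negbTE (mulf_neq0 q0 q0)) orbF subr_eq0 => /eqP XP.
split; first by rewrite XP.
by apply: (addrI y); rewrite addr0 -[in RHS]DzE -XP hornerX.
Qed.

End DifferentialSubfield.

Section PrimitiveOfOne.
Variable x : F.
Hypotheses (Sx : x \in S) (Dx : D x = 1).
Hypotheses (constS : forall c, D c = 0 -> c \in S) (char0 : [pchar F] =i pred0).

Lemma size_deriv_ext_eqX P : P \is a polyOver S -> Dy P = 'X -> (size P <= 2)%N.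
Proof.
move=> SP DyP; rewrite leqNgt; apply/negP => P_gt2.
have [m size_P] : exists m, size P = m.+3 by exists (size P - 3)%N; lia.
have coefDyP i : D P`_i + D y * (P`_i.+1 *+ i.+1) = (i == 1)%:R.
  by rewrite -(coef_deriv_ext derD) DyP coefX.
have Dc : D P`_m.+2 = 0.
  by have := coefDyP m.+2; rewrite [P`_m.+3]nth_default ?size_P // mul0rn mulr0 addr0.
have c0 : P`_m.+2 *+ m.+2 != 0.
  rewrite -mulr_natr mulf_neq0 //; last by move/pcharf0P: char0 => ->.
  have -> : P`_m.+2 = lead_coef P by rewrite lead_coefE size_P.
  by rewrite lead_coef_eq0 -size_poly_gt0 size_P.
(* u is constant by the coefficients of 'X^m.+2 and 'X^m.+1 in [Dy P = 'X]. *)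
pose u := P`_m.+1 + P`_m.+2 *+ m.+2 * y - x *+ (m == 0)%N.
have Du : D u = 0.
  rewrite /u (derivationB derD) (derivationD derD) (derivationM derD).
  rewrite !(derivationMn derD) Dc Dx mul0rn mul0r add0r [_ * D y]mulrC.
  by rewrite (coefDyP m.+1) subrr.
have Sc : P`_m.+2 *+ m.+2 \in S by rewrite rpredMn ?(polyOverP SP).
suff Sy : y \in S by move: transc_notin; rewrite Sy.
rewrite -(fpredMl _ Sc c0) (_ : _ * y = u - P`_m.+1 + x *+ (m == 0)%N).
  by apply: rpredD; [apply: rpredB; [apply: constS | apply: (polyOverP SP)] | apply: rpredMn].
by rewrite /u addrAC subrK [P`_m.+1 + _]addrC addrK.
Qed.

End PrimitiveOfOne.

End TranscendentalElement.

Theorem lemma30 (F : fieldType) (D : F -> F) (E : pred F)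
  (hD : derivation D)
  (hchar : [pchar F] =i pred0)
  (hE : is_diff_subfield D E)
  (hconst : forall c, D c = 0 -> c \in E)
  (hC : constants_alg_closed D)
  (x : F) (hxE : x \in E) (hx : D x = 1)
  (y z : F) (hy : D y \in E) (htr : transcendental_over E y)
  (hz : in_adjoin E y z) (hzy : D z = y) :
  exists A B, [/\ A \in E, B \in E & z = A * y + B].
Proof.
have [[_ E1 EB EM EV] DE] := hE.
pose S : divringClosed F := HB.pack E
  (GRing.isDivringClosed.Build F E (And3 E1 EB (fun a b Ea Eb => EM a _ Ea (EV b Eb)))).
have polyOverE p : coefs_in E p -> p \is a polyOver S by move=> Ep; apply/polyOverP.
have y_transc p : p \is a polyOver S -> p.[y] = 0 -> p = 0 by move/polyOverP; apply: htr.
have [p [q [/polyOverE Sp /polyOverE Sq qy0 def_z]]] := hz.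
have q0 : q != 0 by apply: contraNneq qy0 => ->; rewrite horner0.
have [P [r [SP Sr def_p lt_rq]]] := polyOver_edivp Sq q0 Sp.
have {}def_z : z = P.[y] + r.[y] / q.[y].
  by rewrite def_z def_p hornerD hornerM mulrDl mulfK.
subst z.
have [DyP Drho] := antiderivative_frac_parts (S := S) hD y_transc DE hy SP Sr Sq q0 lt_rq hzy.
have size_P := size_deriv_ext_eqX (S := S) hD y_transc hxE hx hconst hchar SP DyP.
exists P`_1, (P`_0 + r.[y] / q.[y]); split; first exact: (polyOverP SP).
  by change (P`_0 + r.[y] / q.[y] \in S); apply: rpredD; [apply: (polyOverP SP) | apply: hconst].
rewrite (horner_coef_wide _ size_P) !big_ord_recr big_ord0 /= add0r expr0 mulr1 expr1.
by rewrite addrA [_ + P`_1 * y]addrC.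
Qed.
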